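(* Let $b$ and $n\ge 2$ be positive integers and let $h(x)=h_{n-2}x^{n-2}+\cdots+h_1x+h_0$ be a polynomial with complex coefficients of degree at most $n-2$. Define the numbers $h_i'$ ($i\ge 0$) by \[ \Phi_b\left(\frac{h(x)}{(1-x)^n}\right)=\frac{\sum_{i\ge 0}h_i' x^i}{(1-x)^n}. \] Then for every $i\ge 0$, \[ h_i' = b^{n-1}\sum_{j=0}^{n-2} K_b(j,i)\,h_j, \] where $K_b$ is the transition matrix of the base $b$ carries chain for the addition of $n-1$ numbers.
   Context: Let $\mathcal{R}$ be the space of rational functions in $x$ with complex coefficients. Every $R\in\mathcal{R}$ has a Laurent expansion at $x=0$, $R(x)=\sum_{n\gg-\infty} a_n x^n$ (only finitely many nonzero coefficients with negative index). For a positive integer $b$, the map $\Phi_b:\mathcal{R}\to\mathcal{R}$ is defined by $\Phi_b(R(x))=\sum_{n\gg -\infty} a_{bn+(b-1)}x^n$. The base $b$ carries chain for the addition of $m$ numbers: when $m$ numbers are added in base $b$ with all digits chosen independently and uniformly from $\{0,1,\dots,b-1\}$, the successive carries (working from the right, starting from carry $0$) form a Markov chain; if the current carry is $c$ and the digits in the next column are $y_1,\dots,y_m$, the next carry is $\lfloor (c+y_1+\cdots+y_m)/b\rfloor$. Its transition matrix is \[ K_b(c,d)=\frac{1}{b^m}\,\#\{(y_1,\dots,y_m)\in\{0,\dots,b-1\}^m : \lfloor (c+y_1+\cdots+y_m)/b\rfloor = d\} \] for nonnegative integers $c,d$ (here $m=n-1$, and for carries $c\le n-2$ one has $K_b(c,d)=0$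 whenever $d\ge n-1$). *)

From mathcomp Require Import all_boot all_order all_algebra all_field.
Set Implicit Arguments. Unset Strict Implicit. Unset Printing Implicit Defensive.
Import GRing.Theory Num.Theory.
Local Open Scope ring_scope.

(* Formal power series in x (coefficients indexed by nat) over algC (complex
   algebraic numbers, our model of C). *)

Definition pmulser (p : {poly algC}) (A : nat -> algC) : nat -> algC :=
  fun k => \sum_(i < k.+1) p`_i * A (k - i)%N.

Definition Phi (b : nat) (A : nat -> algC) : nat -> algC :=
  fun m => A (b * m + (b - 1))%N.

Definition carryK (b m c d : nat) : algC :=
  (#|[set y : {ffun 'I_m -> 'I_b} | ((c + \sum_(i < m) (y i : nat)) %/ b == d)%N]|)%:R
  / (b ^ m)%:R.

From mathcomp Require Import all_boot all_order all_algebra all_field.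
From mathcomp Require Import zify.
Import GRing.Theory Num.Theory.
Local Open Scope ring_scope.

(* Write u = 1 + x + ... + x^(b-1), so that (1 - x^b)^n = (1 - x)^n u^n.
   Multiplying by q(x^b) and then applying Phi_b is the same as applying Phi_b
   and then multiplying by q(x); with q = (1 - x)^n this turns
   (1 - x)^n Phi_b(h/(1-x)^n) into Phi_b(h u^n), whose i-th coefficient is the
   coefficient of x^(bi+b-1) in h u^n.  Expanding u^n = u * u^(n-1) over digit
   vectors y in {0..b-1}^(n-1), the monomial x^j contributes exactly when
   bi <= j + y_1 + ... + y_(n-1) <= bi + b - 1, i.e. when the carry out of a
   column with incoming carry j and digits y is i. *)

Definition geom_poly {R : nzSemiRingType} (b : nat) : {poly R} := \sum_(t < b) 'X^t.

Lemma divn_eq_window b s i : (0 < b)%N ->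
  (s %/ b == i)%N = (s <= b * i + (b - 1) < s + b)%N.
Proof.
move=> b_gt0; rewrite eqn_leq -ltnS ltn_divLR // leq_divRL // mulSn (mulnC i b).
by apply/andP/andP => -[]; lia.
Qed.

Section GeometricPolynomial.

Variable R : comNzRingType.

Lemma mul_1subX_geom b : (1 - 'X) * geom_poly b = 1 - 'X^b :> {poly R}.
Proof. by rewrite -opprB mulNr -subrX1 opprB. Qed.

Lemma comp_1subX_Xn b n :
  (1 - 'X) ^+ n \Po 'X^b = (1 - 'X) ^+ n * geom_poly b ^+ n :> {poly R}.
Proof. by rewrite -exprMn mul_1subX_geom rmorphXn rmorphB rmorph1 /= comp_polyX. Qed.

Lemma geom_poly_exprE b m :
  geom_poly b ^+ m = \sum_(y : {ffun 'I_m -> 'I_b}) 'X^(\sum_(k < m) y k) :> {poly R}.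
Proof.
rewrite -[in LHS](card_ord m) -prodr_const bigA_distr_bigA.
by apply: eq_bigr => y _; rewrite (big_morph _ (exprD 'X) (expr0 'X)).
Qed.

Lemma coef_geom_poly b k : (geom_poly b)`_k = (k < b)%N%:R :> R.
Proof.
have -> : geom_poly b = \poly_(t < b) 1 :> {poly R}.
  by rewrite poly_def; apply: eq_bigr => t _; rewrite scale1r.
by rewrite coef_poly; case: ltnP.
Qed.

Lemma coef_Xn_mul_geom b s k :
  ('X^s * geom_poly b)`_k = (s <= k < s + b)%N%:R :> R.
Proof.
by rewrite coefXnM coef_geom_poly; case: ltnP => //= sk; rewrite ltn_subLR.
Qed.

Lemma coef_Xn_geom_exprS b m j i : (0 < b)%N ->
  ('X^j * geom_poly b ^+ m.+1)`_(b * i + (b - 1)) =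
  #|[set y : {ffun 'I_m -> 'I_b} | ((j + \sum_(k < m) y k) %/ b == i)%N]|%:R :> R.
Proof.
move=> b_gt0; rewrite exprSr geom_poly_exprE mulr_suml mulr_sumr coef_sum.
rewrite -sumr_const [RHS]big_mkcond /=; apply: eq_bigr => y _.
by rewrite mulrA -exprD coef_Xn_mul_geom -divn_eq_window // inE; case: ifP.
Qed.

End GeometricPolynomial.

Lemma sum_ord_mul (V : nmodType) (F : nat -> V) b M :
  \sum_(d < b * M) F d = \sum_(t < M) \sum_(r < b) F (b * t + r)%N.
Proof.
elim: M => [|M IH]; first by rewrite muln0 !big_ord0.
by rewrite big_ord_recr /= -IH mulnS addnC big_split_ord.
Qed.

Lemma pmulser_polyE (p : {poly algC}) (A : nat -> algC) N k : (k < N)%N ->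
  pmulser p A k = (p * \poly_(d < N) A d)`_k.
Proof.
move=> lt_kN; rewrite /pmulser coefM; apply: eq_bigr => d _.
by rewrite coef_poly (leq_ltn_trans (leq_subr d k) lt_kN).
Qed.

Lemma pmulser_mulr {q h : {poly algC}} {A : nat -> algC} (u : {poly algC}) :
  (forall k, pmulser q A k = h`_k) -> forall k, pmulser (q * u) A k = (h * u)`_k.
Proof.
move=> qA_h k; rewrite (@pmulser_polyE _ _ k.+1) // mulrAC !coefM.
apply: eq_bigr => d _; rewrite -pmulser_polyE ?qA_h // ltnS leq_subr.
Qed.

Lemma pmulser_comp_Xn (q : {poly algC}) (A : nat -> algC) b i : (0 < b)%N ->
  pmulser (q \Po 'X^b) A (b * i + (b - 1)) = pmulser q (Phi b A) i.
Proof.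
move=> b_gt0; rewrite /pmulser /Phi.
have -> : (b * i + (b - 1)).+1 = (b * i.+1)%N by rewrite mulnS; lia.
rewrite (@sum_ord_mul _ (fun d => (q \Po 'X^b)`_d * A (b * i + (b - 1) - d)%N)).
apply: eq_bigr => t _.
rewrite (bigD1 (Ordinal b_gt0)) //= big1 ?addr0 => [|r r_neq0].
  rewrite addn0 coef_comp_poly_Xn // dvdn_mulr // mulKn //; congr (_ * A _).
  have le_ti : (b * t <= b * i)%N by rewrite leq_mul2l -ltnS ltn_ord orbT.
  by rewrite mulnBr; lia.
rewrite coef_comp_poly_Xn // dvdn_addr ?dvdn_mulr // gtnNdvd ?mul0r //.
by move: r_neq0; rewrite -(inj_eq val_inj) lt0n.
Qed.

Lemma carryK_card b m c d : (0 < b)%N ->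
  (b ^ m)%:R * carryK b m c d =
  #|[set y : {ffun 'I_m -> 'I_b} | ((c + \sum_(k < m) y k) %/ b == d)%N]|%:R.
Proof. by move=> b_gt0; rewrite mulrC mulfVK // pnatr_eq0 -lt0n expn_gt0 b_gt0. Qed.

Theorem theorem2p1 (b n : nat) (h : {poly algC}) (A : nat -> algC) :
  (0 < b)%N -> (2 <= n)%N -> (size h <= n.-1)%N ->
  (* A is the expansion at 0 of h(x)/(1-x)^n, i.e. (1-x)^n * A = h *)
  (forall k, pmulser ((1 - 'X) ^+ n) A k = h`_k) ->
  forall i : nat,
    pmulser ((1 - 'X) ^+ n) (Phi b A) i =
    (b ^ n.-1)%:R * \sum_(j < n.-1) carryK b n.-1 j i * h`_j.
Proof.
move=> b_gt0 n_ge2 size_h hA i; case: n => [//|m] in n_ge2 size_h hA * => /=.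
rewrite -pmulser_comp_Xn // comp_1subX_Xn (pmulser_mulr _ hA).
rewrite -[in h * _](take_poly_id size_h) /take_poly poly_def.
rewrite mulr_suml coef_sum mulr_sumr; apply: eq_bigr => j _.
by rewrite -scalerAl coefZ coef_Xn_geom_exprS // -carryK_card // mulrC -mulrA.
Qed.
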